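(* Let $\mathcal{G}=(\mathcal{V},\mathcal{E},w)$ be a simple connected weighted graph with at least two vertices, $s\in\mathcal{V}$, $\beta\in(0,1)$. Let $\dot{\mathcal{V}}\subsetneq\mathcal{V}$ be a subset with $s\in\dot{\mathcal{V}}$ that contains every neighbour of $s$ and induces a connected subgraph. Let $T^\infty=\beta D^\infty+D^{-1}L$ where $D^\infty$ is diagonal with $D^\infty_{vv}=d(v)$ for $v\in\dot{\mathcal{V}}$ and $D^\infty_{vv}=0$ otherwise, and let $x$ solve $T^\infty x=\beta r$ with $r$ the indicator vector of $s$. Then every vertex at which $x$ attains its maximum equals $s$, and $x(s)<1/d(s)$.
   Context: $d(v)=\sum_{u\sim v}w(u,v)$ is the weighted degree, $D=\operatorname{diag}(d(v))$, $A$ the weighted adjacency matrix, $L=D-A$. $r(s)=1$, $r(v)=0$ for $v\ne s$. *)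

From HB Require Import structures.
From mathcomp Require Import all_boot all_order all_algebra.
Set Implicit Arguments. Unset Strict Implicit. Unset Printing Implicit Defensive.
Import Order.TTheory GRing.Theory Num.Theory.
Local Open Scope ring_scope.

(* A weighted graph on a finite vertex type V is given by w : V -> V -> R;
   u ~ v iff 0 < w u v. *)
Definition simple_weighted_graph (R : realFieldType) (V : finType)
  (w : V -> V -> R) : Prop :=
  (forall u v, w u v = w v u) /\ (forall u v, 0 <= w u v) /\ (forall v, w v v = 0).

Definition adj (R : realFieldType) (V : finType) (w : V -> V -> R) : rel V :=
  fun u v => 0 < w u v.

Definition graph_connected (R : realFieldType) (V : finType) (w : V -> V -> R) : Prop :=
  forall u v, connect (adj w) u v.

Definition induced_connected (R : realFieldType) (V : finType) (w : V -> V -> R)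
  (S : {set V}) : Prop :=
  forall u v, u \in S -> v \in S ->
    connect (fun a b => [&& a \in S, b \in S & adj w a b]) u v.

Definition deg (R : realFieldType) (V : finType) (w : V -> V -> R) (v : V) : R :=
  \sum_(u : V) w v u.

Definition lap (R : realFieldType) (V : finType) (w : V -> V -> R) (u v : V) : R :=
  (if u == v then deg w u else 0) - w u v.

Definition Dinf (R : realFieldType) (V : finType) (w : V -> V -> R) (S : {set V})
  (u v : V) : R :=
  if (u == v) && (u \in S) then deg w u else 0.

Definition Tinf (R : realFieldType) (V : finType) (w : V -> V -> R) (S : {set V})
  (beta : R) (u v : V) : R :=
  beta * Dinf w S u v + (deg w u)^-1 * lap w u v.

Definition indic (R : realFieldType) (V : finType) (s : V) (v : V) : R :=
  if v == s then 1 else 0.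

From HB Require Import structures.
From mathcomp Require Import all_boot all_order all_algebra.
Import Order.TTheory GRing.Theory Num.Theory.
Set Implicit Arguments. Unset Strict Implicit. Unset Printing Implicit Defensive.
Local Open Scope ring_scope.

(* Multiplying the equation at u by d(u) gives
   beta d(u)^2 [u in Vd] x(u) + (L x)(u) = beta d(u) [u = s], a discrete
   maximum principle: off Vd the function x is harmonic, so an extremal value
   attained off Vd spreads along edges.  A minimum cannot be negative (at a
   minimiser in Vd the equation forces x >= 0; otherwise the minimum spreads to
   s in Vd), and a maximum away from s is impossible (in Vd it would force
   x = 0, contradicting the source beta at s; off Vd it spreads until it reaches
   a neighbour of s, which lies in Vd).  Finally x(s) is a strict maximum, so
   (L x)(s) > 0 and the equation at s gives d(s) x(s) < 1. *)

Lemma connect_invariant (V : finType) (e : rel V) (P : V -> Prop) a b :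
  connect e a b -> P a -> (forall u v, P u -> e u v -> P v) -> P b.
Proof.
move=> /connectP[p]; elim: p a => [|y p IH] a /=; first by move=> _ ->.
by move=> /andP[eay ep] lastb Pa stepP; apply: (IH y) => //; apply: stepP eay.
Qed.

Section Laplacian.

Variables (R : realFieldType) (V : finType) (w : V -> V -> R).
Hypothesis w_ge0 : forall u v, 0 <= w u v.

Definition lapf (x : V -> R) (u : V) : R := \sum_v w u v * (x u - x v).

Lemma lapfN x u : lapf (fun v => - x v) u = - lapf x u.
Proof.
by rewrite /lapf -sumrN; apply: eq_bigr => v _; rewrite -opprD -mulrN.
Qed.

Lemma lapf_const x c u : (forall v, x v = c) -> lapf x u = 0.
Proof. by move=> xc; rewrite /lapf big1 // => v _; rewrite !xc subrr mulr0. Qed.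

Lemma lapf_max_ge0 x u : (forall v, x v <= x u) -> 0 <= lapf x u.
Proof. by move=> umax; apply: sumr_ge0 => v _; rewrite mulr_ge0 ?subr_ge0. Qed.

Lemma lapf_max_gt0 x u v :
  (forall z, x z <= x u) -> adj w u v -> x v < x u -> 0 < lapf x u.
Proof.
move=> umax uv xvu; rewrite /lapf (bigD1 v) //= ltr_pwDl ?mulr_gt0 ?subr_gt0 //.
by apply: sumr_ge0 => z _; rewrite mulr_ge0 ?subr_ge0.
Qed.

Lemma lapf_max_eq0 x u v :
  (forall z, x z <= x u) -> lapf x u = 0 -> adj w u v -> x v = x u.
Proof.
move=> umax Lu0 uv; apply/eqP; rewrite eq_le umax leNgt /=.
by apply/negP => /(lapf_max_gt0 umax uv); rewrite Lu0 ltxx.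
Qed.

Lemma lapf_min_le0 x u : (forall v, x u <= x v) -> lapf x u <= 0.
Proof.
by move=> umin; rewrite -oppr_ge0 -lapfN; apply: lapf_max_ge0 => v; rewrite lerN2.
Qed.

Lemma lapf_min_eq0 x u v :
  (forall z, x u <= x z) -> lapf x u = 0 -> adj w u v -> x v = x u.
Proof.
move=> umin Lu0 uv; apply: oppr_inj; apply: (lapf_max_eq0 (x := fun z => - x z)) => //.
  by move=> z; rewrite lerN2.
by rewrite lapfN Lu0 oppr0.
Qed.

Lemma deg_gt0 u v : adj w u v -> 0 < deg w u.
Proof.
move=> uv; rewrite /deg (bigD1 v) //= ltr_pwDl //.
by apply: sumr_ge0 => z _.
Qed.

Lemma Tinf_mulE (S : {set V}) beta x u :
  \sum_v Tinf w S beta u v * x v =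
  beta * (if u \in S then deg w u * x u else 0) + (deg w u)^-1 * lapf x u.
Proof.
rewrite /Tinf; under eq_bigr => v _ do rewrite mulrDl -!mulrA.
rewrite big_split /= -!mulr_sumr; congr (_ * _ + _ * _).
  rewrite (bigD1 u) //= big1 ?addr0 => [|v vu]; last first.
    by rewrite /Dinf eq_sym (negbTE vu) mul0r.
  by rewrite /Dinf eqxx; case: (u \in S); rewrite ?mul0r.
rewrite /lapf /lap; under eq_bigr => v _ do rewrite mulrBl.
rewrite sumrB (bigD1 u) //= big1 ?addr0 => [|v vu]; last first.
  by rewrite eq_sym (negbTE vu) mul0r.
under [RHS]eq_bigr => v _ do rewrite mulrBr.
by rewrite sumrB eqxx -mulr_suml.
Qed.

End Laplacian.

Lemma connected_exists_adj (R : realFieldType) (V : finType) (w : V -> V -> R) u :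
  graph_connected w -> (1 < #|V|)%N -> exists v, adj w u v.
Proof.
move=> conn /card_gt1P[p [q [_ _ pq]]].
have [b bu] : exists b, b != u.
  by case: (eqVneq p u) => [<-|pu]; [exists q; rewrite eq_sym | exists p].
case/connectP: (conn u b) => [[|y p']] /=; first by move=> _ bu'; rewrite bu' eqxx in bu.
by case/andP => uy _ _; exists y.
Qed.

Section Solution.

Variables (R : realFieldType) (V : finType) (w : V -> V -> R).
Variables (s : V) (beta : R) (S : {set V}) (x : V -> R).

Hypothesis w_sym : forall u v, w u v = w v u.
Hypothesis w_ge0 : forall u v, 0 <= w u v.
Hypothesis w_loop : forall v, w v v = 0.
Hypothesis conn : graph_connected w.
Hypothesis card_V : (1 < #|V|)%N.
Hypothesis beta_gt0 : 0 < beta.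
Hypothesis s_in_S : s \in S.
Hypothesis adj_s_in_S : forall v, adj w s v -> v \in S.
Hypothesis solves : forall u,
  \sum_v Tinf w S beta u v * x v = beta * indic R s u.

Let d_gt0 u : 0 < deg w u.
Proof. by have [v /(deg_gt0 w_ge0)] := connected_exists_adj u conn card_V. Qed.

Lemma solution_in u : u \in S ->
  beta * (deg w u * x u) = beta * indic R s u - (deg w u)^-1 * lapf w x u.
Proof. by move=> uS; rewrite -(solves u) Tinf_mulE uS addrK. Qed.

Lemma solution_notin u : u \notin S -> lapf w x u = 0.
Proof.
move=> uS; have := solves u; rewrite Tinf_mulE (negbTE uS) mulr0 add0r /indic.
rewrite ifN ?mulr0; last by apply: contraNneq uS => ->.
by move/eqP; rewrite mulf_eq0 invr_eq0 (gt_eqF (d_gt0 u)) => /eqP.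
Qed.

Lemma solution_ge0 v : 0 <= x v.
Proof.
have [a _ amin] := @arg_minP _ R V s xpredT x isT.
apply: le_trans (amin v isT); case: (boolP [exists u in S, x u == x a]).
  case/exists_inP => u uS /eqP xua; rewrite -xua.
  have umin z : x u <= x z by rewrite xua; apply: amin.
  have Lu := lapf_min_le0 w_ge0 umin.
  have Du : (deg w u)^-1 * lapf w x u <= 0 by rewrite pmulr_rle0 ?invr_gt0.
  have ind : 0 <= indic R s u by rewrite /indic; case: ifP.
  have : 0 <= beta * (deg w u * x u).
    by rewrite solution_in // subr_ge0 (le_trans Du) // mulr_ge0 // ltW.
  by rewrite !pmulr_rge0.
rewrite negb_exists_in => /forall_inP noS.
suff xsa : x s = x a by move: (noS s s_in_S); rewrite xsa eqxx.
apply: (@connect_invariant _ _ (fun z => x z = x a) a s (conn a s)) => // u z xua uz.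
rewrite (lapf_min_eq0 w_ge0 _ (solution_notin _) uz) // => [y|].
  by rewrite xua; apply: amin.
by apply/negP => /noS; rewrite xua eqxx.
Qed.

Lemma solution_argmax_notin u : (forall z, x z <= x u) -> u != s -> u \notin S.
Proof.
move=> umax us; apply/negP => uS.
have Du : 0 <= (deg w u)^-1 * lapf w x u.
  by rewrite mulr_ge0 ?invr_ge0 ?(ltW (d_gt0 u)) ?lapf_max_ge0.
have : beta * (deg w u * x u) <= 0.
  by rewrite solution_in // /indic (negbTE us) mulr0 sub0r oppr_le0.
rewrite !pmulr_rle0 // => xu0.
have x0 z : x z = 0 by apply/eqP; rewrite eq_le solution_ge0 (le_trans (umax z)).
have := solution_in s_in_S; rewrite (lapf_const _ _ x0) x0 /indic eqxx.
by rewrite !mulr0 mulr1 subr0 => /eqP; rewrite eq_sym (gt_eqF beta_gt0).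
Qed.

Lemma solution_argmax v : (forall u, x u <= x v) -> v = s.
Proof.
move=> vmax; case: (eqVneq v s) => // vs.
suff [_] : x s = x v /\ s != s by rewrite eqxx.
apply: (@connect_invariant _ _ (fun z => x z = x v /\ z != s) v s (conn v s)) => //.
move=> u z [xuv us] uz.
have umax y : x y <= x u by rewrite xuv.
have uS := solution_argmax_notin umax us.
split; first by rewrite (lapf_max_eq0 w_ge0 umax (solution_notin uS) uz).
by apply: contraNneq uS => zs; apply: adj_s_in_S; rewrite /adj w_sym -zs.
Qed.

Lemma solution_lt_inv_deg : x s < (deg w s)^-1.
Proof.
have [m _ mmax] := @arg_maxP _ R V s xpredT x isT.
have smax u : x u <= x s.
  by rewrite -(solution_argmax (fun z => mmax z isT)); apply: mmax.
have [y sy] := connected_exists_adj s conn card_V.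
have xys : x y < x s.
  rewrite lt_neqAle smax andbT; apply/negP => /eqP xy.
  have ys : y = s by apply: solution_argmax => u; rewrite xy.
  by move: sy; rewrite /adj ys w_loop ltxx.
have Ds : 0 < (deg w s)^-1 * lapf w x s.
  by rewrite mulr_gt0 ?invr_gt0 ?d_gt0 // (lapf_max_gt0 w_ge0 smax sy).
have : beta * (deg w s * x s) < beta * 1.
  by rewrite solution_in // /indic eqxx gtrBl.
rewrite ltr_pM2l // => dxs_lt1.
by rewrite -(ltr_pM2l (d_gt0 s)) mulfV // gt_eqF.
Qed.

End Solution.

Theorem mainTheorem9 (R : realFieldType) (V : finType) (w : V -> V -> R)
  (s : V) (beta : R) (Vd : {set V}) (x : V -> R) :
  simple_weighted_graph w ->
  graph_connected w ->
  (1 < #|V|)%N ->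
  0 < beta < 1 ->
  s \in Vd ->
  Vd \proper [set: V] ->
  (forall v, adj w s v -> v \in Vd) ->
  induced_connected w Vd ->
  (forall u, \sum_(v : V) Tinf w Vd beta u v * x v = beta * indic R s u) ->
  (forall v, (forall u, x u <= x v) -> v = s) /\ x s < (deg w s)^-1.
Proof.
move=> [w_sym [w_ge0 w_loop]] conn card_V /andP[beta_gt0 _] sVd _ adj_s _ solves.
split; first exact: solution_argmax w_sym w_ge0 conn card_V beta_gt0 sVd adj_s solves.
exact: solution_lt_inv_deg w_sym w_ge0 w_loop conn card_V beta_gt0 sVd adj_s solves.
Qed.
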